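(* Let $n,k,\ell\ge1$ and let $P$ be an $(n,k,\ell)$ correlation problem with input distribution $\mu$. Suppose that for some $\delta$ with $0\le\delta\le1$ and some $r\ge0$, every rectangle $R=R_1\times\cdots\times R_n\subseteq\{1,\ldots,k\}^n$ with $\mathrm{adv}_a(R)\ge\delta$ satisfies $\mu(R)\le r$, for every $a\in\{1,\ldots,\ell\}^n$. Then every classical model with shared randomness in which $c$ bits are broadcast, having detection efficiency $\eta$ and error probability $\epsilon$, satisfies \[ \frac{1}{2^c}\,\eta^n\Big(1-\epsilon\,\frac{1}{1-\delta}\Big)\le \ell^n r . \]
   Context: An $(n,k,\ell)$ correlation problem with input distribution $\mu$ (a probability distribution on $\{1,\ldots,k\}^n$) is a family of probability distributions $P(\cdot|x)$ on outputs $a\in\{1,\ldots,\ell\}^n$, one for each input $x$ with $\mu(x)>0$. For $a\in\{1,\ldots,\ell\}^n$ let $\mathrm{adm}_a=\{x:P(a|x)>0\}$, and for a set $S$ of inputs let $\mathrm{adv}_a(S)=\mu(S\cap\mathrm{adm}_a)/\mu(S)$. A deterministic classical model with communication is a rooted protocol tree: each internal node is labeled by a party who broadcasts which child to go to, according to a partition of that party's input set $\{1,\ldots,k\}$ among the outgoing edges; each leaf $v$ carries local output functions $\lambda_{v,i}$ from $\{1,\ldots,k\}$ to $\{1,\ldots,\ell\}\cup\{\perp\}$ ($\perp$ = no detector click); on input $x$ the execution follows the tree to a leaf $v$ and party $i$ outputs $\lambda_{v,i}(x_i)$. The number of bits broadcast is $c=\sum\lceil\log t_j\rceil$, the $t_j$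 being the numbers of children of the nodes on the path taken (maximized over paths). A classical model with shared randomness is a probability distribution over such deterministic models, inducing output probabilities $Q(a|x)$. Let $C$ be the indicator that all outputs differ from $\perp$; the detection efficiency is $\eta=(\mathbb E_{x\sim\mu}[\sum_aQ(a|x)C])^{1/n}$; with $F$ the indicator of $P(a|x)=0$, the error probability is $\epsilon=\mathbb E_{x\sim\mu}[\sum_aQ(a|x)\,F\,C/\eta^n]$. *)

From HB Require Import structures.
From mathcomp Require Import all_boot all_order all_algebra.
Set Implicit Arguments. Unset Strict Implicit. Unset Printing Implicit Defensive.
Import Order.TTheory GRing.Theory Num.Theory.
Local Open Scope ring_scope.

Definition inputs (n k : nat) := {ffun 'I_n -> 'I_k}.
Definition outputs (n l : nat) := {ffun 'I_n -> 'I_l}.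

(* A leaf carries the local output functions
   lambda_{v,i} : 'I_k -> option 'I_l  (None = perp, no detector click).
   An internal node is labelled by a party i, has t children, and partitions
   party i's input set among the children via route : 'I_k -> 'I_t. *)
Inductive ptree (n k l : nat) : Type :=
| PLeaf of ('I_n -> 'I_k -> option 'I_l)
| PNode (i : 'I_n) (t : nat) of ('I_k -> 'I_t) & ('I_t -> ptree n k l).

Fixpoint leaf_out n k l (T : ptree n k l) (x : inputs n k) : 'I_n -> 'I_k -> option 'I_l :=
  match T with
  | PLeaf lam => lam
  | PNode i t route ch => leaf_out (ch (route (x i))) x
  end.

Definition run n k l (T : ptree n k l) (x : inputs n k) (i : 'I_n) : option 'I_l :=
  leaf_out T x i (x i).

Fixpoint path_bits n k l (T : ptree n k l) (x : inputs n k) : nat :=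
  match T with
  | PLeaf _ => 0
  | PNode i t route ch => (up_log 2 t + path_bits (ch (route (x i))) x)%N
  end.

Definition bits n k l (T : ptree n k l) : nat := \max_(x : inputs n k) path_bits T x.

(* Q(a|x) for a model with shared randomness given as a finite mixture
   (weights w over deterministic trees Ts), restricted to a with no perp. *)
Definition Qprob (R : numDomainType) n k l m (w : 'I_m -> R) (Ts : 'I_m -> ptree n k l)
  (a : outputs n l) (x : inputs n k) : R :=
  \sum_(j < m) w j * (if [forall i, run (Ts j) x i == Some (a i)] then 1 else 0).

(* E_x[ sum_a Q(a|x) C ] = eta^n *)
Definition detection_mass (R : numDomainType) n k l m (mu : inputs n k -> R)
  (w : 'I_m -> R) (Ts : 'I_m -> ptree n k l) : R :=
  \sum_(x : inputs n k) mu x * \sum_(a : outputs n l) Qprob w Ts a x.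

(* E_x[ sum_a Q(a|x) F C ]  (to be divided by eta^n) *)
Definition error_mass (R : numDomainType) n k l m (mu : inputs n k -> R)
  (P : inputs n k -> outputs n l -> R)
  (w : 'I_m -> R) (Ts : 'I_m -> ptree n k l) : R :=
  \sum_(x : inputs n k) mu x *
     \sum_(a : outputs n l) Qprob w Ts a x * (if P x a == 0 then 1 else 0).

Definition muS (R : numDomainType) n k (mu : inputs n k -> R) (S : {set inputs n k}) : R :=
  \sum_(x in S) mu x.

Definition adm (R : numDomainType) n k l (P : inputs n k -> outputs n l -> R)
  (a : outputs n l) : {set inputs n k} := [set x | 0 < P x a].

Definition adv (R : numFieldType) n k l (mu : inputs n k -> R)
  (P : inputs n k -> outputs n l -> R) (a : outputs n l) (S : {set inputs n k}) : R :=
  muS mu (S :&: adm P a) / muS mu S.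

Definition rectangle n k (Rs : 'I_n -> {set 'I_k}) : {set inputs n k} :=
  [set x : inputs n k | [forall i, x i \in Rs i]].

Definition is_distribution (R : numDomainType) (T : finType) (mu : T -> R) : Prop :=
  (forall x, 0 <= mu x) /\ \sum_x mu x = 1.

Definition is_correlation_problem (R : numDomainType) n k l (mu : inputs n k -> R)
  (P : inputs n k -> outputs n l -> R) : Prop :=
  forall x, 0 < mu x -> is_distribution (P x).

(* A deterministic protocol in which at most c bits are broadcast cuts any rectangle of
   inputs into at most 2^c rectangles, on each of which every party's output is a function
   of its own input; fixing the output string a cuts each of them into l^n rectangles on
   which the protocol outputs a everywhere.  On such a rectangle S either adv_a(S) >= delta,
   so mu(S) <= r, or inadmissible inputs carry more than a (1 - delta) fraction of mu(S);
   in both cases mu(S) - e_a(S) / (1 - delta) <= r, where e_a(S) is the mu-mass of the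
   inputs x in S with P(a|x) = 0.  Summing over the 2^c l^n pieces and averaging over the
   shared randomness gives eta^n - eta^n eps / (1 - delta) <= 2^c l^n r. *)

From HB Require Import structures.
From mathcomp Require Import all_boot all_order all_algebra.
From mathcomp Require Import lra zify.
Set Implicit Arguments. Unset Strict Implicit. Unset Printing Implicit Defensive.
Import Order.TTheory GRing.Theory Num.Theory.
Local Open Scope ring_scope.

Section Rectangles.
Variables n k : nat.
Implicit Types Rs Ss : 'I_n -> {set 'I_k}.

Lemma in_rectangleT (x : inputs n k) : x \in rectangle (fun _ => [set: 'I_k]).
Proof. by rewrite inE; apply/forallP => i; rewrite inE. Qed.

Lemma rectangleI Rs Ss :
  rectangle (fun i => Rs i :&: Ss i) = rectangle Rs :&: rectangle Ss.
Proof.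
apply/setP => x; rewrite !inE; apply/forallP/andP => [xRS | [/forallP xR /forallP xS] i].
  by split; apply/forallP => i; have /setIP[] := xRS i.
by rewrite inE xR xS.
Qed.

Lemma rectangle_cylinder (i : 'I_n) (A : {set 'I_k}) :
  rectangle (fun j => if j == i then A else setT) = [set x : inputs n k | x i \in A].
Proof.
apply/setP => x; rewrite !inE; apply/forallP/idP => [/(_ i) | xiA j]; first by rewrite eqxx.
by case: eqP => [->|_]; rewrite ?inE.
Qed.

End Rectangles.

Lemma leq_mul_expn_sub_up_log (t c : nat) :
  (up_log 2 t <= c)%N -> (t * 2 ^ (c - up_log 2 t) <= 2 ^ c)%N.
Proof. by move=> le_c; rewrite -{2}(subnKC le_c) expnD leq_mul2r up_logP ?orbT. Qed.

Section Protocols.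
Variables (R : numDomainType) (n k l : nat).
Implicit Types (T : ptree n k l) (x : inputs n k) (a : outputs n l).
Implicit Types Rs Ss : 'I_n -> {set 'I_k}.

Definition clicks T x a := [forall i, run T x i == Some (a i)].

Lemma clicks_node i t (route : 'I_k -> 'I_t) ch x a :
  clicks (PNode i route ch) x a = clicks (ch (route (x i))) x a.
Proof. by []. Qed.

Lemma clicks_leaf lam x a :
  clicks (PLeaf lam) x a = (x \in rectangle (fun i => [set y | lam i y == Some (a i)])).
Proof. by rewrite inE; apply: eq_forallb => i; rewrite inE. Qed.

Lemma protocol_sum_le (psi : inputs n k -> outputs n l -> R) (B : R) T Rs (c : nat) :
  0 <= B ->
  (forall Ss a, rectangle Ss \subset [set x in rectangle Rs | clicks T x a] ->
     \sum_(x in rectangle Ss) psi x a <= B) ->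
  (forall x, x \in rectangle Rs -> (path_bits T x <= c)%N) ->
  \sum_(x in rectangle Rs) \sum_(a | clicks T x a) psi x a <= (2 ^ c * l ^ n)%:R * B.
Proof.
move=> B_ge0; elim: T Rs c => [lam | i t route ch IH] Rs c pieces_le bits_le.
  rewrite (exchange_big_dep predT) //=.
  apply: (@le_trans _ _ (\sum_(a : outputs n l) B)).
    apply: ler_sum => a _.
    set Ss := fun i => Rs i :&: [set y | lam i y == Some (a i)].
    have eqS : rectangle Ss =i [pred x | (x \in rectangle Rs) && clicks (PLeaf lam) x a].
      by move=> x; rewrite rectangleI in_setI -clicks_leaf.
    rewrite -(eq_bigl _ _ eqS) pieces_le //; apply/subsetP => x.
    by rewrite eqS inE.
  rewrite sumr_const card_ffun !card_ord -[B *+ _]mulr_natl; apply: ler_wpM2r => //.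
  by rewrite ler_nat leq_pmull // expn_gt0.
have [-> | [x0 x0R]] := set_0Vmem (rectangle Rs); first by rewrite big_set0 mulr_ge0.
rewrite (partition_big (fun x => route (x i)) predT) //=.
set Rq := fun q j => Rs j :&: if j == i then [set y | route y == q] else setT.
have eqRq q : rectangle (Rq q) =i [pred x | (x \in rectangle Rs) && (route (x i) == q)].
  by move=> x; rewrite rectangleI rectangle_cylinder !inE.
apply: (@le_trans _ _ (\sum_(q < t) (2 ^ (c - up_log 2 t) * l ^ n)%:R * B)).
  apply: ler_sum => q _; rewrite -(eq_bigl _ _ (eqRq q)).
  rewrite (eq_bigr (fun x => \sum_(a | clicks (ch q) x a) psi x a)); last first.
    by move=> x; rewrite eqRq => /andP[_ /eqP <-].
  apply: IH => [Ss a /subsetP sub | x].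
    apply: pieces_le; apply/subsetP => x /sub /setIdP[]; rewrite eqRq => /andP[xR /eqP xq] cl.
    by apply/setIdP; rewrite clicks_node xq.
  rewrite eqRq => /andP[xR /eqP xq]; have := bits_le x xR; rewrite /= xq; lia.
rewrite sumr_const card_ord -[_ *+ t]mulr_natl mulrA -natrM; apply: ler_wpM2r => //.
rewrite ler_nat mulnA leq_mul2r leq_mul_expn_sub_up_log ?orbT //; have := bits_le x0 x0R; rewrite /=; lia.
Qed.

End Protocols.

Definition error_ind (R : numDomainType) n k l (P : inputs n k -> outputs n l -> R) x a : R :=
  if P x a == 0 then 1 else 0.

Definition click_mass (R : numDomainType) n k l (mu : inputs n k -> R) (T : ptree n k l)
    (h : inputs n k -> outputs n l -> R) : R :=
  \sum_x \sum_(a | clicks T x a) mu x * h x a.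

Section Mixtures.
Variables (R : numDomainType) (n k l m : nat) (mu : inputs n k -> R).
Variables (w : 'I_m -> R) (Ts : 'I_m -> ptree n k l).

Lemma mixture_mass (h : inputs n k -> outputs n l -> R) :
  \sum_x mu x * \sum_a Qprob w Ts a x * h x a = \sum_(j < m) w j * click_mass mu (Ts j) h.
Proof.
transitivity (\sum_x \sum_a \sum_(j < m) w j * (if clicks (Ts j) x a then mu x * h x a else 0)).
  apply: eq_bigr => x _; rewrite mulr_sumr; apply: eq_bigr => a _.
  rewrite mulr_suml mulr_sumr; apply: eq_bigr => j _.
  by rewrite /clicks; case: ifP => _; rewrite ?(mulr0, mul0r, mulr1) // mulrCA.
symmetry; transitivity
  (\sum_(j < m) \sum_x \sum_a w j * (if clicks (Ts j) x a then mu x * h x a else 0)).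
  apply: eq_bigr => j _; rewrite /click_mass mulr_sumr; apply: eq_bigr => x _.
  by rewrite mulr_sumr [LHS]big_mkcond; apply: eq_bigr => a _; case: ifP; rewrite ?mulr0.
by rewrite exchange_big; apply: eq_bigr => x _; exact: exchange_big.
Qed.

End Mixtures.

Section ClickMass.
Variables (R : numDomainType) (n k l : nat) (mu : inputs n k -> R) (T : ptree n k l).
Variable h : inputs n k -> outputs n l -> R.
Hypotheses (mu_ge0 : forall x, 0 <= mu x) (h_ge0 : forall x a, 0 <= h x a).

Lemma click_mass_ge0 : 0 <= click_mass mu T h.
Proof. by do 2![apply: sumr_ge0 => ? _]; apply: mulr_ge0. Qed.

Lemma sum_le_click_mass (S : {set inputs n k}) a :
  S \subset [set x | clicks T x a] -> \sum_(x in S) mu x * h x a <= click_mass mu T h.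
Proof.
move=> /subsetP S_clicks.
apply: (@le_trans _ _ (\sum_(x in S) \sum_(b | clicks T x b) mu x * h x b)).
  apply: ler_sum => x /S_clicks; rewrite inE => cl.
  by rewrite (bigD1 a) //= lerDl; apply: sumr_ge0 => b _; apply: mulr_ge0.
rewrite /click_mass [leRHS](bigID (mem S)) /= lerDl.
by do 2![apply: sumr_ge0 => ? _]; apply: mulr_ge0.
Qed.

End ClickMass.

Section CorrelationProblem.
Variables (R : realFieldType) (n k l : nat).
Variables (mu : inputs n k -> R) (P : inputs n k -> outputs n l -> R).
Hypotheses (mu_ge0 : forall x, 0 <= mu x) (P_problem : is_correlation_problem mu P).
Implicit Types (S : {set inputs n k}) (a : outputs n l).

Lemma muS_adm_error S a :
  muS mu S = muS mu (S :&: adm P a) + \sum_(x in S) mu x * error_ind P x a.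
Proof.
rewrite /muS big_mkcond [X in _ = X + _]big_mkcond [X in _ = _ + X]big_mkcond -big_split /=.
apply: eq_bigr => x _; rewrite in_setI; case: (x \in S); rewrite ?addr0 //= inE /error_ind.
have /orP[/eqP <- | mux_gt0] : (0 == mu x) || (0 < mu x) by rewrite -le_eqVlt.
  by rewrite !mul0r addr0; case: ifP.
have [P_ge0 _] := P_problem mux_gt0.
have /orP[/eqP <- | Pxa_gt0] : (0 == P x a) || (0 < P x a) by rewrite -le_eqVlt.
  by rewrite ltxx eqxx add0r mulr1.
by rewrite Pxa_gt0 (gt_eqF Pxa_gt0) mulr0 addr0.
Qed.

Lemma error_ind_ge0 x a : 0 <= error_ind P x a.
Proof. by rewrite /error_ind; case: ifP. Qed.

(* For [delta = 1] the factor [(1 - delta)^-1] is [0], and the error mass must vanish. *)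
Lemma muS_sub_error_le (delta r : R) S a :
  0 <= delta -> delta <= 1 -> 0 <= r ->
  (delta <= adv mu P a S -> muS mu S <= r) ->
  (delta < 1 \/ \sum_(x in S) mu x * error_ind P x a = 0) ->
  muS mu S - (\sum_(x in S) mu x * error_ind P x a) * (1 - delta)^-1 <= r.
Proof.
move=> d_ge0 d_le1 r_ge0 dense_small err_cond.
have := muS_adm_error S a.
set m := muS mu S in dense_small *; set g := muS mu _; set e := \sum_(x in S) _ => m_eq.
have g_ge0 : 0 <= g by apply: sumr_ge0.
have e_ge0 : 0 <= e by apply: sumr_ge0 => x _; rewrite mulr_ge0 ?error_ind_ge0.
have eK_ge0 : 0 <= e * (1 - delta)^-1 by rewrite mulr_ge0 // invr_ge0 subr_ge0.
set eK := e * _ in eK_ge0 *.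
have [/dense_small | sparse] := lerP delta (adv mu P a S); first lra.
have /orP[/eqP m0 | m_gt0] : (0 == m) || (0 < m) by rewrite -le_eqVlt m_eq addr_ge0.
  lra.
(* Below density [delta] the errors carry more than a [1 - delta] fraction of the mass. *)
move: sparse; rewrite /adv -/m -/g ltr_pdivrMr // => g_lt.
case: err_cond => [d_lt1 | e0]; last by rewrite -/e in e0; nra.
suff : m <= eK by lra.
by rewrite /eK ler_pdivlMr ?subr_gt0 //; nra.
Qed.

Lemma click_mass_sub_error_le (delta r : R) T (c : nat) :
  0 <= delta -> delta <= 1 -> 0 <= r ->
  (forall a Rs, delta <= adv mu P a (rectangle Rs) -> muS mu (rectangle Rs) <= r) ->
  (bits T <= c)%N ->
  (delta < 1 \/ click_mass mu T (error_ind P) = 0) ->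
  click_mass mu T (fun _ _ => 1) - click_mass mu T (error_ind P) * (1 - delta)^-1
    <= (2 ^ c * l ^ n)%:R * r.
Proof.
move=> d_ge0 d_le1 r_ge0 rect_small bits_c err_cond.
pose psi x a := mu x - mu x * error_ind P x a * (1 - delta)^-1.
have := @protocol_sum_le R n k l psi r T (fun _ => setT) c r_ge0.
rewrite (eq_bigl _ _ (@in_rectangleT n k)).
have -> : click_mass mu T (fun _ _ => 1) - click_mass mu T (error_ind P) * (1 - delta)^-1
    = \sum_x \sum_(a | clicks T x a) psi x a.
  rewrite /click_mass mulr_suml -sumrB; apply: eq_bigr => x _.
  by rewrite mulr_suml -sumrB; apply: eq_bigr => a _; rewrite mulr1.
apply.
  move=> Ss a /subsetP piece; rewrite /psi sumrB -mulr_suml.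
  apply: muS_sub_error_le => //; first exact: rect_small.
  case: err_cond => [|err0]; [by left | right].
  apply: le_anti; apply/andP; split.
    rewrite -[leRHS]err0; apply: sum_le_click_mass => //; first exact: error_ind_ge0.
    by apply/subsetP => x /piece /setIdP[_ cl]; rewrite inE.
  by apply: sumr_ge0 => x _; rewrite mulr_ge0 ?error_ind_ge0.
by move=> x _; apply: leq_trans bits_c; exact: (leq_bigmax (F := path_bits T)).
Qed.
Lemma mixture_sub_error_le (delta r : R) (m c : nat) (w : 'I_m -> R) (Ts : 'I_m -> ptree n k l) :
  0 <= delta -> delta <= 1 -> 0 <= r ->
  (forall a Rs, delta <= adv mu P a (rectangle Rs) -> muS mu (rectangle Rs) <= r) ->
  is_distribution w -> (forall j, (bits (Ts j) <= c)%N) ->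
  (delta < 1 \/ \sum_j w j * click_mass mu (Ts j) (error_ind P) = 0) ->
  \sum_j w j * click_mass mu (Ts j) (fun _ _ => 1)
    - (\sum_j w j * click_mass mu (Ts j) (error_ind P)) * (1 - delta)^-1
    <= (2 ^ c * l ^ n)%:R * r.
Proof.
move=> d_ge0 d_le1 r_ge0 rect_small [w_ge0 w_sum1] bits_c err_cond.
have -> : (2 ^ c * l ^ n)%:R * r = \sum_j w j * ((2 ^ c * l ^ n)%:R * r).
  by rewrite -mulr_suml w_sum1 mul1r.
rewrite mulr_suml -sumrB.
apply: ler_sum => j _; rewrite -mulrA -mulrBr.
have [-> | wj_neq0] := eqVneq (w j) 0; first by rewrite !mul0r.
apply: ler_wpM2l => //; apply: click_mass_sub_error_le => //.
case: err_cond => [|err0]; [by left | right].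
have err_ge0 i : 0 <= w i * click_mass mu (Ts i) (error_ind P).
  by rewrite mulr_ge0 // click_mass_ge0 // => x a; exact: error_ind_ge0.
move/(psumr_eq0P (fun i _ => err_ge0 i))/(_ j isT)/eqP: err0.
by rewrite mulf_eq0 (negbTE wj_neq0) => /eqP.
Qed.

End CorrelationProblem.

Theorem theorem2 (R : realFieldType) (n k l : nat)
  (mu : inputs n k -> R) (P : inputs n k -> outputs n l -> R)
  (delta r : R) (c m : nat) (w : 'I_m -> R) (Ts : 'I_m -> ptree n k l) (eta eps : R) :
  (0 < n)%N -> (0 < k)%N -> (0 < l)%N ->
  is_distribution mu ->
  is_correlation_problem mu P ->
  0 <= delta -> delta <= 1 -> 0 <= r ->
  (forall (a : outputs n l) (Rs : 'I_n -> {set 'I_k}),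
      delta <= adv mu P a (rectangle Rs) -> muS mu (rectangle Rs) <= r) ->
  is_distribution w ->
  (forall j, (bits (Ts j) <= c)%N) ->
  0 <= eta -> eta ^+ n = detection_mass mu w Ts ->
  eps = error_mass mu P w Ts / eta ^+ n ->
  (delta < 1 \/ eps = 0) ->
  (2%:R ^+ c)^-1 * eta ^+ n * (1 - eps * (1 - delta)^-1) <= l%:R ^+ n * r.
Proof.
move=> _ _ _ [mu_ge0 _] P_problem d_ge0 d_le1 r_ge0 rect_small w_distr bits_c _.
move=> det_eq eps_eq exact_or_small.
have [-> | eta_n_neq0] := eqVneq (eta ^+ n) 0.
  by rewrite mulr0 mul0r mulr_ge0 // exprn_ge0.
have det_mix : eta ^+ n = \sum_j w j * click_mass mu (Ts j) (fun _ _ => 1).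
  rewrite det_eq -mixture_mass; apply: eq_bigr => x _.
  by congr (_ * _); apply: eq_bigr => a _; rewrite mulr1.
have err_mix : eps * eta ^+ n = \sum_j w j * click_mass mu (Ts j) (error_ind P).
  by rewrite eps_eq divfK // -mixture_mass.
have := mixture_sub_error_le mu_ge0 P_problem d_ge0 d_le1 r_ge0 rect_small w_distr bits_c.
rewrite -err_mix -det_mix natrM !natrX => bound.
have two_c_gt0 : 0 < (2%:R ^+ c : R) by rewrite exprn_gt0.
rewrite -mulrA ler_pdivrMl // mulrBr mulr1 mulrCA !mulrA; apply: bound.
by case: exact_or_small => [|->]; [left | right; rewrite mul0r].
Qed.
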